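(* Let $\mathcal{X}\subseteq\mathbb{R}^n$ be a compact set, $\mathcal{X}_0\subseteq\mathcal{X}$, and $f:\mathcal{X}\to\mathcal{X}$. Let $\mathcal{X}_{VF}\subseteq\mathcal{X}$ be partitioned as $\mathcal{X}_{VF}=\bigcup_{i=1}^{p}\mathcal{X}_{VF_i}$ for some $p\in\mathbb{N}$. Suppose there exist a function $\mathcal{T}:\mathcal{X}\times\mathcal{X}\to\mathbb{R}$ and functions $\mathcal{V}_i:\mathcal{X}\times\mathcal{X}\to\mathbb{R}_{\geq 0}$ (bounded from below), $1\le i\le p$, such that: (i) for all $x\in\mathcal{X}$: $\mathcal{T}(x,f(x))\geq 0$; (ii) for all $x,y\in\mathcal{X}$: if $\mathcal{T}(f(x),y)\geq 0$ then $\mathcal{T}(x,y)\geq 0$; (iii) for every $x_0\in\mathcal{X}_0$ and every $1\le i\le p$ there exists $\xi_i>0$ such that for all $z,z'\in\mathcal{X}_{VF_i}$: if $\mathcal{T}(x_0,z)\geq 0$ and $\mathcal{T}(z,z')\geq 0$, then $\mathcal{V}_i(x_0,z')\leq \mathcal{V}_i(x_0,z)-\xi_i$. Then for every $x_0\in\mathcal{X}_0$, the state sequence $\langle x_0,x_1,\ldots\rangle$ defined by $x_{k+1}=f(x_k)$ satisfies $x_k\in\mathcal{X}_{VF}$ for only finitely many $k\in\mathbb{N}$.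
   Context: This concerns a discrete-time dynamical system $(\mathcal{X},\mathcal{X}_0,f)$ with state set $\mathcal{X}$, initial set $\mathcal{X}_0$ and transition map $f$; its state sequences are $\langle x_0,x_1,\ldots\rangle$ with $x_0\in\mathcal{X}_0$ and $x_{k+1}=f(x_k)$. ''Visited only finitely often'' means only finitely many elements of the state sequence lie in the set. *)

From HB Require Import structures.
From mathcomp Require Import all_boot all_order all_algebra.
From mathcomp Require Import all_classical all_reals topology normedtype.
Set Implicit Arguments. Unset Strict Implicit. Unset Printing Implicit Defensive.
Import Order.TTheory GRing.Theory Num.Theory.
Import numFieldNormedType.Exports.
Local Open Scope classical_set_scope.
Local Open Scope ring_scope.

Definition state_seq (T : Type) (f : T -> T) (x0 : T) (k : nat) : T := iter k f x0.

(** The relation [0 <= T x y] holds along the orbit between any earlier and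
    any later state: [T (x_k) (x_(k+1)) >= 0] by (i), and (ii) propagates it
    backwards one step at a time.  Hence, for a fixed cell [X_VF_i], condition
    (iii) applies to every pair of positive visiting times [k < m], so
    [V_i (x_0, .)] drops by at least [xi_i] from each visit to the next.  Being
    nonnegative, it allows only finitely many visits; a finite union over the
    [p] cells, plus possibly time [0], remains finite. *)

From HB Require Import structures.
From mathcomp Require Import all_boot all_order all_algebra.
From mathcomp Require Import all_classical all_reals topology normedtype.
From mathcomp Require Import lra.
Import Order.TTheory GRing.Theory Num.Theory.
Import numFieldNormedType.Exports.
Local Open Scope classical_set_scope.
Local Open Scope ring_scope.

Section OrbitRelation.
Variables (A : Type) (X : set A) (f : A -> A) (r : A -> A -> Prop).
Hypothesis f_invariant : forall x, X x -> X (f x).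
Hypothesis r_step : forall x, X x -> r x (f x).
Hypothesis r_back : forall x y, X x -> X y -> r (f x) y -> r x y.

Lemma iter_invariant x k : X x -> X (iter k f x).
Proof. by move=> Xx; elim: k => [|k IHk] //=; apply: f_invariant. Qed.

Lemma iter_rel_lt x k m : X x -> (k < m)%N -> r (iter k f x) (iter m f x).
Proof.
move=> Xx /subnKC <-; move: (m - k.+1)%N => d.
elim: d k => [|d IHd] k.
  by rewrite addn0 iterS; apply/r_step/iter_invariant.
apply: r_back; try exact: iter_invariant.
by rewrite -iterS addnS -addSn; apply: IHd.
Qed.

End OrbitRelation.

Lemma bounded_nat_finite (S : set nat) N :
  (forall k, S k -> (k < N)%N) -> finite_set S.
Proof. by move=> SN; apply: (sub_finite_set _ (finite_II N)) => k /SN. Qed.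

Lemma gap_decreasing_finite (R : archiRealFieldType) (S : set nat) (u : nat -> R)
    (xi : R) :
  0 < xi -> (forall k, S k -> 0 <= u k) ->
  (forall k m, S k -> S m -> (k < m)%N -> u m <= u k - xi) ->
  finite_set S.
Proof.
move=> xi_gt0 u_ge0 u_gap.
have [[N SN] | unbounded] := pselect (exists N, forall k, S k -> (k < N)%N).
  exact: bounded_nat_finite SN.
have late N : exists2 k, S k & (N <= k)%N.
  apply: contrapT => no_late; apply: unbounded; exists N => k Sk.
  by rewrite ltnNge; apply/negP => Nk; apply: no_late; exists k.
have [k0 Sk0 _] := late 0%N.
have descent j : exists2 k, S k & u k <= u k0 - j%:R * xi.
  elim: j => [|j [k Sk ukj]]; first by exists k0; rewrite // mul0r subr0.
  have [m Sm km] := late k.+1.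
  exists m => //; have := u_gap _ _ Sk Sm km; rewrite mulrSr; lra.
have u0xi_ge0 : 0 <= u k0 / xi by rewrite divr_ge0 ?u_ge0 ?ltW.
have := archi_boundP u0xi_ge0; rewrite ltr_pdivrMr // => u0_lt.
have [k Sk ukj] := descent (Num.Def.archi_bound (u k0 / xi)).
have := u_ge0 _ Sk; lra.
Qed.

Theorem lemma1 (R : realType) (n p : nat)
  (X X0 : set 'rV[R]_n) (f : 'rV[R]_n -> 'rV[R]_n)
  (XVFi : 'I_p -> set 'rV[R]_n) (XVF : set 'rV[R]_n)
  (T : 'rV[R]_n -> 'rV[R]_n -> R) (V : 'I_p -> 'rV[R]_n -> 'rV[R]_n -> R) :
  compact X ->
  X0 `<=` X ->
  (forall x, X x -> X (f x)) ->
  XVF `<=` X ->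
  XVF = \bigcup_(i in [set: 'I_p]) XVFi i ->
  (forall i j, i != j -> XVFi i `&` XVFi j = set0) ->
  (forall i x y, X x -> X y -> 0 <= V i x y) ->
  (forall x, X x -> 0 <= T x (f x)) ->
  (forall x y, X x -> X y -> 0 <= T (f x) y -> 0 <= T x y) ->
  (forall x0, X0 x0 -> forall i : 'I_p, exists2 xi : R, 0 < xi &
     forall z z', XVFi i z -> XVFi i z' ->
       0 <= T x0 z -> 0 <= T z z' -> V i x0 z' <= V i x0 z - xi) ->
  forall x0, X0 x0 ->
    finite_set [set k : nat | XVF (state_seq f x0 k)].
Proof.
move=> _ X0X fX _ XVFE _ V_ge0 T_step T_back V_gap x0 X0x0.
have Xx0 := X0X _ X0x0.
have T_lt k m : (k < m)%N -> 0 <= T (state_seq f x0 k) (state_seq f x0 m).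
  exact: (@iter_rel_lt _ X f (fun x y => 0 <= T x y) fX T_step T_back).
pose visits i := [set k | (0 < k)%N /\ XVFi i (state_seq f x0 k)].
have visits_finite i : finite_set (visits i).
  have [xi xi_gt0 Vi_gap] := V_gap _ X0x0 i.
  apply: (@gap_decreasing_finite _ _ (fun k => V i x0 (state_seq f x0 k)) xi xi_gt0).
  - by move=> k _; apply: V_ge0 => //; apply: iter_invariant.
  - move=> k m [k_gt0 XVFik] [_ XVFim] km.
    exact: Vi_gap XVFik XVFim (T_lt 0%N k k_gt0) (T_lt k m km).
apply: (@sub_finite_set _ _ ([set 0%N] `|` \bigcup_(i in [set: 'I_p]) visits i)).
  move=> [|k]; first by left.
  by rewrite /= XVFE => -[i _ XVFik]; right; exists i.
rewrite finite_setU; split; first exact: finite_set1.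
by apply: bigcup_finite => [|i _]; [exact: finite_finset | exact: visits_finite].
Qed.
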